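(* Let $L_1,L_2,L_3\in\mathbb{Z}[x_1,x_2]$ be pairwise non-proportional linear forms, let $\Delta_{i,j}$ denote the resultant of $L_i,L_j$ and $\Delta=|\Delta_{1,2}\Delta_{1,3}\Delta_{2,3}|\neq0$. Write $L_i=\ell_iL_i^*$ with $\ell_i\in\mathbb{Z}$ and $L_i^*$ primitive. For $\mathbf{h}\in\mathbb{N}^3$ let $$\rho(\mathbf{h})=\#\{\mathbf{x}\in[0,h_1h_2h_3)^2\cap\mathbb{Z}^2:\ h_i\mid L_i(\mathbf{x})\ (i=1,2,3)\}.$$ Let $p$ be a prime and $e_1,e_2,e_3\ge0$ integers. (i) If $\min\{e_i,v_p(\ell_i)\}=0$ (for the relevant index $i$), then respectively $\rho(p^{e_1},1,1)=p^{e_1}$, $\rho(1,p^{e_2},1)=p^{e_2}$, $\rho(1,1,p^{e_3})=p^{e_3}$. (ii) Suppose $0\le e_i\le e_j\le e_k$ for a permutation $\{i,j,k\}$ of $\{1,2,3\}$. Then $\rho(p^{e_1},p^{e_2},p^{e_3})=p^{2e_i+e_j+e_k}$ if $p\nmid\Delta$, while if $p\mid\Delta$, $$\rho(p^{e_1},p^{e_2},p^{e_3})\le p^{2e_i+e_j+e_k+\min\{e_j,v_p(\Delta)\}+\min\{e_k,v_p(\ell_k)\}}.$$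
   Context: $v_p$ denotes the $p$-adic valuation. *)

From mathcomp Require Import all_boot all_order all_algebra.
Set Implicit Arguments. Unset Strict Implicit. Unset Printing Implicit Defensive.
Import Order.TTheory GRing.Theory Num.Theory.

Definition i0 : 'I_3 := @Ordinal 3 0 isT.
Definition i1 : 'I_3 := @Ordinal 3 1 isT.
Definition i2 : 'I_3 := @Ordinal 3 2 isT.

Definition L (a b : 'I_3 -> int) (i : 'I_3) (x1 x2 : int) : int :=
  (a i * x1 + b i * x2)%R.

Definition res (a b : 'I_3 -> int) (i j : 'I_3) : int :=
  (a i * b j - a j * b i)%R.

Definition Delta (a b : 'I_3 -> int) : nat :=
  `| (res a b i0 i1 * res a b i0 i2 * res a b i1 i2)%R |%N.

Definition proportional (a b : 'I_3 -> int) (i j : 'I_3) : Prop :=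
  exists lam mu : int, (lam != 0 \/ mu != 0) /\
    (lam * a i = mu * a j)%R /\ (lam * b i = mu * b j)%R.

(* |ell_i| where L_i = ell_i L_i^* with L_i^* primitive: the gcd of the
   coefficients (the sign of ell_i is irrelevant for p-adic valuations). *)
Definition ell (a b : 'I_3 -> int) (i : 'I_3) : nat := gcdn `|a i|%N `|b i|%N.

Definition Hprod (h : 'I_3 -> nat) : nat := h i0 * h i1 * h i2.

Definition rho (a b : 'I_3 -> int) (h : 'I_3 -> nat) : nat :=
  #|[pred x : 'I_(Hprod h) * 'I_(Hprod h) |
      [forall i : 'I_3, ((h i)%:Z %| L a b i (x.1 : nat)%:Z (x.2 : nat)%:Z)%Z]]|.

From mathcomp Require Import all_boot all_order all_algebra.
From mathcomp Require Import ring zify.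
Import Order.TTheory GRing.Theory Num.Theory.

(* Work in the box [0, p^N)^2 with N = e_1 + e_2 + e_3.  By Cramer's rule
   Delta_{jk} x is an integer combination of L_j(x) and L_k(x).  If p does not
   divide Delta_{jk}, the map x |-> (L_j x, L_k x) is therefore a bijection of
   (Z/p^N)^2, and the condition at i follows from those at j and k because
   Delta_{jk} L_i = Delta_{ik} L_j - Delta_{ij} L_k; so rho counts pairs of
   residues divisible by p^{e_j} and p^{e_k}.  In general the conditions at j
   and k force p^s, s = e_j - v_p(Delta_{jk}), to divide both coordinates;
   after rescaling by p^s the condition at k is a linear congruence whose
   coefficients L_k^* are primitive, and such a congruence modulo p^t has
   exactly p^{2M - t} solutions in [0, p^M)^2.  Part (i) is this last count. *)

Definition count_box (Q : nat) (P : nat -> nat -> bool) : nat :=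
  \sum_(0 <= x1 < Q) \sum_(0 <= x2 < Q) P x1 x2.

Lemma sum_nat_eqb (m t : nat) : t < m -> \sum_(0 <= i < m) (i == t : nat) = 1.
Proof.
move=> tm; rewrite (eq_bigr (fun i => if i == t then 1 else 0)); last by move=> i _; case: eqP.
by rewrite -big_mkcond sum1_count count_uniq_mem ?iota_uniq // mem_iota subn0 add0n tm.
Qed.

Lemma big_nat_mulS (m n : nat) (F : nat -> nat) :
  \sum_(0 <= y < m * n.+1) F y = \sum_(0 <= y < m * n) F y + \sum_(0 <= i < m) F (i + m * n).
Proof.
rewrite mulnS addnC (big_cat_nat _ (n := m * n)) ?leq_addr //=; congr (_ + _).
by rewrite -[in X in \sum_(X <= _ < _) _](add0n (m * n)) big_addn addKn.
Qed.

Lemma sum_modn_eqb (m n t : nat) : t < m -> \sum_(0 <= y < m * n) (y %% m == t : nat) = n.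
Proof.
move=> tm; elim: n => [|n IHn]; first by rewrite muln0 big_geq.
rewrite big_nat_mulS IHn -addn1 -(@sum_nat_eqb m t tm); congr (_ + _).
rewrite big_nat_cond [in RHS]big_nat_cond; apply: eq_bigr => i /andP[/andP[_ im] _].
by rewrite addnC mulnC modnMDl modn_small.
Qed.

Lemma sum_dvdn_mul (m n : nat) (F : nat -> nat) : 0 < m ->
  \sum_(0 <= x < m * n) (m %| x) * F x = \sum_(0 <= y < n) F (m * y).
Proof.
move=> m_gt0; elim: n => [|n IHn]; first by rewrite muln0 !big_geq.
rewrite big_nat_mulS IHn big_nat_recr //=; congr (_ + _).
rewrite big_ltn // add0n dvdn_mulr // mul1n big_nat_cond big1 ?addn0 //.
move=> i /andP[/andP[i_gt0 im] _].
by rewrite dvdn_addl ?dvdn_mulr // gtnNdvd.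
Qed.

Lemma eq_count_box (Q : nat) (P P' : nat -> nat -> bool) :
  (forall x1 x2, P x1 x2 = P' x1 x2) -> count_box Q P = count_box Q P'.
Proof. by move=> PP'; apply: eq_bigr => x1 _; apply: eq_bigr => x2 _; rewrite PP'. Qed.

Lemma leq_count_box (Q : nat) (P P' : nat -> nat -> bool) :
  (forall x1 x2, P x1 x2 -> P' x1 x2) -> count_box Q P <= count_box Q P'.
Proof.
move=> PP'; apply: leq_sum => x1 _; apply: leq_sum => x2 _.
by case: (boolP (P x1 x2)) => // /PP' ->.
Qed.

Lemma count_box_swap (Q : nat) (P : nat -> nat -> bool) :
  count_box Q (fun x1 x2 => P x2 x1) = count_box Q P.
Proof. exact: exchange_big_nat. Qed.

Lemma count_box_pair (Q : nat) (P : nat -> nat -> bool) :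
  count_box Q P = \sum_(x : 'I_Q * 'I_Q) P x.1 x.2.
Proof.
rewrite /count_box big_mkord; under eq_bigr do rewrite big_mkord.
by rewrite pair_big.
Qed.

Lemma count_box_card (Q : nat) (P : nat -> nat -> bool) :
  count_box Q P = #|[pred x : 'I_Q * 'I_Q | P x.1 x.2]|.
Proof.
rewrite count_box_pair -sum1_card [RHS]big_mkcond /=.
by apply: eq_bigr => x _; rewrite inE; case: (P _ _).
Qed.

Lemma count_box_dvdn (m n : nat) (P : nat -> nat -> bool) : 0 < m ->
  count_box (m * n) (fun x1 x2 => [&& m %| x1, m %| x2 & P x1 x2])
  = count_box n (fun y1 y2 => P (m * y1) (m * y2)).
Proof.
move=> m_gt0; rewrite /count_box.
transitivity (\sum_(0 <= x1 < m * n) (m %| x1) *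
                \sum_(0 <= x2 < m * n) (m %| x2) * P x1 x2).
  apply: eq_bigr => x1 _; rewrite big_distrr; apply: eq_bigr => x2 _ /=.
  by rewrite !mulnb.
by rewrite sum_dvdn_mul //; apply: eq_bigr => y1 _; rewrite sum_dvdn_mul.
Qed.

Lemma count_box_dvdn2 (Q d1 d2 : nat) : 0 < Q -> d1 %| Q -> d2 %| Q ->
  count_box Q (fun y1 y2 => (d1 %| y1) && (d2 %| y2)) = Q %/ d1 * (Q %/ d2).
Proof.
move=> Q_gt0 d1Q d2Q.
have count_dvdn d : d %| Q -> \sum_(0 <= y < Q) (d %| y : nat) = Q %/ d.
  move=> dQ; have := sum_dvdn_mul d (Q %/ d) (fun=> 1) (dvdn_gt0 Q_gt0 dQ).
  by under eq_bigr do rewrite muln1; rewrite mulnC divnK // sum_nat_const_nat muln1 subn0.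
rewrite /count_box -(count_dvdn d1) // big_distrl /=; apply: eq_bigr => y1 _.
by rewrite -(count_dvdn d2) // big_distrr; apply: eq_bigr => y2 _; rewrite /= mulnb.
Qed.

Lemma pfactor_dvdn_mull (p t g n : nat) : prime p -> 0 < g ->
  (p ^ t %| g * n) = (p ^ (t - logn p g) %| n).
Proof.
move=> p_pr g_gt0; have [->|n_gt0] := posnP n; first by rewrite muln0 !dvdn0.
by rewrite !pfactor_dvdn ?muln_gt0 ?g_gt0 // lognM // leq_subLR.
Qed.

Section LinearCongruences.

Local Open Scope ring_scope.

Lemma sum_dvdz_addn (m n : nat) (c : int) : (0 < m)%N ->
  (\sum_(0 <= y < m * n) ((m%:Z %| (c + y%:Z)%R)%Z : nat))%N = n.
Proof.
move=> m_gt0; have mz : m%:Z != 0 by rewrite eqz_nat -lt0n.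
set t := `|((- c) %% m%:Z)%Z|%N.
have tm : (t < m)%N by rewrite -ltz_nat gez0_abs ?modz_ge0 ?ltz_pmod ?ltz_nat.
rewrite -[RHS](@sum_modn_eqb m n t tm); apply: eq_bigr => y _; congr nat_of_bool.
by rewrite -eqz_nat gez0_abs ?modz_ge0 // -modz_nat eqz_mod_dvd opprK addrC.
Qed.

Lemma sum_dvdz_affine (m n : nat) (b c : int) : (0 < m)%N -> coprimez b m%:Z ->
  (\sum_(0 <= y < m * n) ((m%:Z %| (c + b * y%:Z)%R)%Z : nat))%N = n.
Proof.
move=> m_gt0 /coprimezP[[u v] /= uv].
have mu : coprimez m%:Z u by apply/coprimezP; exists (v, b); rewrite /= addrC mulrC.
rewrite -[RHS](@sum_dvdz_addn m n (u * c) m_gt0); apply: eq_bigr => y _; congr nat_of_bool.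
have -> : u * c + y%:Z = u * (c + b * y%:Z) + v * y%:Z * m%:Z.
  by rewrite -[y%:Z in LHS]mul1r -uv; ring.
by rewrite (rpredDr _ (dvdz_mull _ (dvdzz _))) Gauss_dvdzr.
Qed.

Lemma count_box_primitive_congruence (p N G : nat) (a b : int) :
  prime p -> (G <= N)%N -> ~~ (p %| gcdn `|a| `|b|)%N ->
  count_box (p ^ N) (fun y1 y2 => ((p ^ G)%:Z %| (a * y1%:Z + b * y2%:Z)%R)%Z)
  = (p ^ N * p ^ (N - G))%N.
Proof.
move=> p_pr GN; wlog pb : a b / ~~ (p %| `|b|)%N => [IH pab|_].
  have [pb|/negbNE pb] := boolP (~~ (p %| `|b|)%N); first exact: IH.
  have pa : ~~ (p %| `|a|)%N by apply: contra pab => pa; rewrite dvdn_gcd pa.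
  rewrite -[LHS]count_box_swap -(IH b a pa) 1?gcdnC //.
  by apply: eq_count_box => y1 y2; rewrite addrC.
rewrite /count_box (eq_bigr (fun=> p ^ (N - G))%N) ?sum_nat_const_nat ?subn0 // => y1 _.
have -> : (p ^ N = p ^ G * p ^ (N - G))%N by rewrite -expnD subnKC.
apply: sum_dvdz_affine; first by rewrite expn_gt0 prime_gt0.
by rewrite coprimezE /= coprime_sym coprimeXl // prime_coprime.
Qed.

Lemma pfactor_dvdz_mull (p t : nat) (r z : int) : prime p -> r != 0 ->
  ((p ^ t)%:Z %| r * z)%Z = ((p ^ (t - logn p `|r|))%:Z %| z)%Z.
Proof. by move=> p_pr r0; rewrite !dvdzE /= abszM pfactor_dvdn_mull ?absz_gt0. Qed.

Lemma primitive_decomposition (a b : int) : (0 < gcdn `|a| `|b|)%N ->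
  exists a' b' : int, [/\ a = a' * (gcdn `|a| `|b|)%:Z, b = b' * (gcdn `|a| `|b|)%:Z
                        & gcdn `|a'| `|b'| = 1%N].
Proof.
set g := gcdn `|a| `|b| => g_gt0.
set a' := (a %/ g%:Z)%Z; set b' := (b %/ g%:Z)%Z.
have ea : a = a' * g%:Z by rewrite divzK // dvdzE dvdn_gcdl.
have eb : b = b' * g%:Z by rewrite divzK // dvdzE dvdn_gcdr.
exists a', b'; split=> //; apply/eqP.
have : gcdn `|a| `|b| = (gcdn `|a'| `|b'| * g)%N by rewrite muln_gcdl {1}ea {1}eb !abszM.
by rewrite -/g -{1}(mul1n g)%N => /eqP; rewrite eqn_pmul2r // eq_sym.
Qed.

Lemma count_box_linear_form (p N t : nat) (a b : int) :
  prime p -> (t <= N)%N -> (0 < gcdn `|a| `|b|)%N ->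
  count_box (p ^ N) (fun y1 y2 => ((p ^ t)%:Z %| (a * y1%:Z + b * y2%:Z)%R)%Z)
  = (p ^ N * p ^ (N - (t - logn p (gcdn `|a| `|b|))))%N.
Proof.
set g := gcdn `|a| `|b| => p_pr tN g_gt0.
have [a' [b' [ea eb g'1]]] := primitive_decomposition _ _ g_gt0; rewrite -/g in ea eb.
have tN' : (t - logn p g <= N)%N := leq_trans (leq_subr _ _) tN.
rewrite -(@count_box_primitive_congruence p N (t - logn p g) a' b') //; last first.
  by rewrite g'1 dvdn1 neq_ltn prime_gt1 ?orbT.
apply: eq_count_box => y1 y2.
have -> : a * y1%:Z + b * y2%:Z = g%:Z * (a' * y1%:Z + b' * y2%:Z) by rewrite ea eb; ring.
by rewrite pfactor_dvdz_mull // eqz_nat -lt0n.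
Qed.

End LinearCongruences.

Lemma ord3P (m : 'I_3) : [|| m == i0, m == i1 | m == i2].
Proof. by case: m => [[|[|[|]]]]. Qed.

Lemma ord3_cover (i j k : 'I_3) : i != j -> i != k -> j != k ->
  forall m : 'I_3, [|| m == i, m == j | m == k].
Proof.
move: (ord3P i) (ord3P j) (ord3P k) => /or3P[]/eqP-> /or3P[]/eqP-> /or3P[]/eqP-> // _ _ _ m;
  by case/or3P: (ord3P m) => /eqP->.
Qed.

Lemma Hprod_perm (h : 'I_3 -> nat) (i j k : 'I_3) : i != j -> i != k -> j != k ->
  Hprod h = h i * h j * h k.
Proof.
rewrite /Hprod.
by move: (ord3P i) (ord3P j) (ord3P k) => /or3P[]/eqP-> /or3P[]/eqP-> /or3P[]/eqP-> // _ _ _; ring.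
Qed.

Section BinaryForms.

Variables a b : 'I_3 -> int.

Local Open Scope ring_scope.

Lemma L_scale (i : 'I_3) (c x1 x2 : int) : L a b i (c * x1) (c * x2) = c * L a b i x1 x2.
Proof. by rewrite /L; ring. Qed.

Lemma L_sub (i : 'I_3) (x1 x2 y1 y2 : int) :
  L a b i (x1 - y1) (x2 - y2) = L a b i x1 x2 - L a b i y1 y2.
Proof. by rewrite /L; ring. Qed.

Lemma res_swap (j k : 'I_3) : res a b k j = - res a b j k.
Proof. by rewrite /res; ring. Qed.

Lemma res_mul_coord1 (j k : 'I_3) (x1 x2 : int) :
  res a b j k * x1 = b k * L a b j x1 x2 - b j * L a b k x1 x2.
Proof. by rewrite /res /L; ring. Qed.

Lemma res_mul_coord2 (j k : 'I_3) (x1 x2 : int) :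
  res a b j k * x2 = a j * L a b k x1 x2 - a k * L a b j x1 x2.
Proof. by rewrite /res /L; ring. Qed.

Lemma res_mul_L (i j k : 'I_3) (x1 x2 : int) :
  res a b j k * L a b i x1 x2 = res a b i k * L a b j x1 x2 - res a b i j * L a b k x1 x2.
Proof. by rewrite /res /L; ring. Qed.

Lemma dvdz_res_mul_coord (d x1 x2 : int) (j k : 'I_3) :
  (d %| L a b j x1 x2)%Z -> (d %| L a b k x1 x2)%Z ->
  (d %| res a b j k * x1)%Z && (d %| res a b j k * x2)%Z.
Proof.
by move=> dj dk; rewrite (res_mul_coord1 j k x1 x2) (res_mul_coord2 j k x1 x2) !rpredB ?dvdz_mull.
Qed.

Lemma dvdz_coord_coprime_res (d x1 x2 : int) (j k : 'I_3) : coprimez d (res a b j k) ->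
  (d %| L a b j x1 x2)%Z -> (d %| L a b k x1 x2)%Z -> (d %| x1)%Z && (d %| x2)%Z.
Proof.
by move=> cop dj dk; rewrite -(Gauss_dvdzr x1 cop) -(Gauss_dvdzr x2 cop) dvdz_res_mul_coord.
Qed.

Lemma dvdz_coord_pfactor (p e : nat) (x1 x2 : int) (j k : 'I_3) :
  prime p -> res a b j k != 0 ->
  ((p ^ e)%:Z %| L a b j x1 x2)%Z -> ((p ^ e)%:Z %| L a b k x1 x2)%Z ->
  ((p ^ (e - logn p `|res a b j k|))%:Z %| x1)%Z
  && ((p ^ (e - logn p `|res a b j k|))%:Z %| x2)%Z.
Proof.
by move=> p_pr r0 dj dk; rewrite -!pfactor_dvdz_mull // dvdz_res_mul_coord.
Qed.

Lemma dvdz_L_coprime_res (d x1 x2 : int) (i j k : 'I_3) : coprimez d (res a b j k) ->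
  (d %| L a b j x1 x2)%Z -> (d %| L a b k x1 x2)%Z -> (d %| L a b i x1 x2)%Z.
Proof.
by move=> cop dj dk; rewrite -(Gauss_dvdzr _ cop) res_mul_L rpredB ?dvdz_mull.
Qed.

(* Reduction modulo Q of x |-> (L_j x, L_k x) is injective on 'I_Q * 'I_Q, since
   its determinant res j k is a unit modulo Q. *)
Lemma count_box_forms_coprime (Q d1 d2 : nat) (j k : 'I_3) :
  (0 < Q)%N -> coprimez Q%:Z (res a b j k) -> (d1 %| Q)%N -> (d2 %| Q)%N ->
  count_box Q (fun x1 x2 =>
    (d1%:Z %| L a b j x1%:Z x2%:Z)%Z && (d2%:Z %| L a b k x1%:Z x2%:Z)%Z)
  = (Q %/ d1 * (Q %/ d2))%N.
Proof.
case: Q => // n _ cop d1Q d2Q.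
pose red (z : int) : 'I_n.+1 := inord `|(z %% n.+1%:Z)%Z|.
have redE z : (red z : nat)%:Z = (z %% n.+1%:Z)%Z.
  by rewrite inordK ?gez0_abs ?modz_ge0 // -ltz_nat gez0_abs ?modz_ge0 ?ltz_pmod.
have dvdz_red d z : (d %| n.+1)%N -> (d%:Z %| z)%Z = (d %| red z)%N.
  move=> dQ; rewrite -[RHS]/(d%:Z %| (red z : nat)%:Z)%Z redE.
  by rewrite {1}(divz_eq z n.+1%:Z) rpredDl // dvdz_mull // dvdzE.
have red_eq z w : red z = red w -> (n.+1%:Z %| z - w)%Z.
  by move/(congr1 (fun i : 'I_n.+1 => (i : nat)%:Z)); rewrite !redE -eqz_mod_dvd => ->.
have ord_eq (x y : 'I_n.+1) : (n.+1%:Z %| (x : nat)%:Z - (y : nat)%:Z)%Z -> x = y.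
  by rewrite -eqz_mod_dvd !modz_nat !modn_small // => /eqP [] /val_inj.
pose phi (x : 'I_n.+1 * 'I_n.+1) := (red (L a b j x.1 x.2), red (L a b k x.1 x.2)).
have phi_inj : injective phi.
  move=> [x1 x2] [y1 y2] [/red_eq dj /red_eq dk]; rewrite -L_sub in dj; rewrite -L_sub in dk.
  by have /andP[/ord_eq -> /ord_eq ->] := dvdz_coord_coprime_res _ _ _ _ _ cop dj dk.
rewrite -count_box_dvdn2 // !count_box_pair [RHS](reindex_inj phi_inj) /=.
by apply: eq_bigr => x _; rewrite (dvdz_red _ _ d1Q) (dvdz_red _ _ d2Q).
Qed.

Lemma count_box_forms_bound (p N ej ek : nat) (j k : 'I_3) :
  prime p -> (ej <= ek <= N)%N -> res a b j k != 0 -> (0 < ell a b k)%N ->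
  (count_box (p ^ N) (fun x1 x2 =>
     ((p ^ ej)%:Z %| L a b j x1%:Z x2%:Z)%Z && ((p ^ ek)%:Z %| L a b k x1%:Z x2%:Z)%Z)
   <= p ^ (2 * N - ej - ek + minn ej (logn p `|res a b j k|)
           + minn ek (logn p (ell a b k))))%N.
Proof.
move=> p_pr /andP[jk kN] r0 g_gt0.
set s := (ej - logn p `|res a b j k|)%N.
have sk : (s <= ek)%N by rewrite (leq_trans (leq_subr _ _) jk).
have -> : (p ^ N = p ^ s * p ^ (N - s))%N by rewrite -expnD subnKC // (leq_trans sk kN).
apply: (@leq_trans (count_box (p ^ s * p ^ (N - s)) (fun x1 x2 =>
    [&& p ^ s %| x1, p ^ s %| x2 & ((p ^ ek)%:Z %| L a b k x1%:Z x2%:Z)%Z]))%N).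
  apply: leq_count_box => x1 x2 /andP[dj dk]; rewrite dk andbT.
  have djk : ((p ^ ej)%:Z %| (p ^ ek)%:Z)%Z by rewrite dvdzE dvdn_exp2l.
  by have := dvdz_coord_pfactor _ _ _ _ _ _ p_pr r0 dj (dvdz_trans djk dk); rewrite !dvdzE.
rewrite count_box_dvdn ?expn_gt0 ?prime_gt0 //.
rewrite (@eq_count_box _ _ (fun y1 y2 => ((p ^ (ek - s))%:Z %| L a b k y1%:Z y2%:Z)%Z)).
  rewrite count_box_linear_form ?leq_sub2r // -/(ell a b k) -expnD.
  by rewrite leq_pexp2l ?prime_gt0 // /s; lia.
move=> y1 y2; rewrite !PoszM L_scale.
have -> : (p ^ ek)%:Z = (p ^ s)%:Z * (p ^ (ek - s))%:Z by rewrite -PoszM -expnD subnKC.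
by rewrite dvdz_mul2l // eqz_nat expn_eq0 negb_and -lt0n prime_gt0.
Qed.

End BinaryForms.

Section Rho.

Variables a b : 'I_3 -> int.

Hypothesis nonproportional : forall i j : 'I_3, i != j -> ~ proportional a b i j.

Lemma ell_gt0 (i : 'I_3) : 0 < ell a b i.
Proof.
rewrite gcdn_gt0 !absz_gt0 -negb_and; apply/negP => /andP[/eqP ai0 /eqP bi0].
pose j : 'I_3 := if i == i0 then i1 else i0.
have ij : i != j by rewrite /j; case/or3P: (ord3P i) => /eqP->.
apply: (nonproportional _ _ ij); exists 1%R, 0%R; split; first by left.
by rewrite ai0 bi0 !mul0r !mulr0.
Qed.

Lemma rho_count_box (h : 'I_3 -> nat) :
  rho a b h = count_box (Hprod h)
    (fun x1 x2 => [forall i : 'I_3, ((h i)%:Z %| L a b i x1%:Z x2%:Z)%Z]).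
Proof. by rewrite count_box_card. Qed.

Lemma rho_single (i : 'I_3) (d : nat) :
  rho a b (fun m => if m == i then d else 1%N)
  = count_box d (fun x1 x2 => (d%:Z %| L a b i x1%:Z x2%:Z)%Z).
Proof.
rewrite rho_count_box.
have -> : Hprod (fun m => if m == i then d else 1%N) = d.
  by rewrite /Hprod; case/or3P: (ord3P i) => /eqP->; rewrite /= ?muln1 ?mul1n.
apply: eq_count_box => x1 x2.
apply/forallP/idP => [/(_ i)|di m]; first by rewrite eqxx.
by case: eqP => [->|_] //; exact: dvd1z.
Qed.

Lemma rho_perm (h : 'I_3 -> nat) (i j k : 'I_3) : i != j -> i != k -> j != k ->
  rho a b h = count_box (h i * h j * h k) (fun x1 x2 =>
    [&& ((h i)%:Z %| L a b i x1%:Z x2%:Z)%Z, ((h j)%:Z %| L a b j x1%:Z x2%:Z)%Z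
      & ((h k)%:Z %| L a b k x1%:Z x2%:Z)%Z]).
Proof.
move=> ij ik jk; rewrite rho_count_box (Hprod_perm h _ _ _ ij ik jk).
apply: eq_count_box => x1 x2; apply/forallP/and3P => [dvd_all|[di dj dk] m].
  by split; apply: dvd_all.
by case/or3P: (ord3_cover _ _ _ ij ik jk m) => /eqP->.
Qed.

Lemma res_dvd_Delta (j k : 'I_3) : j != k -> `|res a b j k| %| Delta a b.
Proof.
rewrite /Delta !abszM.
move: (ord3P j) (ord3P k) => /or3P[]/eqP-> /or3P[]/eqP-> // _;
  rewrite ?(res_swap a b i0 i1) ?(res_swap a b i0 i2) ?(res_swap a b i1 i2) ?abszN;
  first [by do 2 apply: dvdn_mulr | by apply: dvdn_mulr; apply: dvdn_mull | exact: dvdn_mull].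
Qed.

Lemma rho_pow_coprime (p : nat) (e : 'I_3 -> nat) (i j k : 'I_3) :
  prime p -> i != j -> i != k -> j != k -> e i <= e j <= e k ->
  ~~ (p %| `|res a b j k|) ->
  rho a b (fun m => p ^ e m) = p ^ (2 * e i + e j + e k).
Proof.
move=> p_pr ij ik jk /andP[eij ejk] pr.
have cop n : coprimez (p ^ n)%:Z (res a b j k) by rewrite coprimezE coprimeXl // prime_coprime.
rewrite (rho_perm _ _ _ _ ij ik jk) -!expnD.
rewrite (@eq_count_box _ _ (fun x1 x2 =>
    ((p ^ e j)%:Z %| L a b j x1%:Z x2%:Z)%Z && ((p ^ e k)%:Z %| L a b k x1%:Z x2%:Z)%Z)).
  have [ejN ekN] : e j <= e i + e j + e k /\ e k <= e i + e j + e k by split; lia.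
  rewrite count_box_forms_coprime ?expn_gt0 ?prime_gt0 ?dvdn_exp2l //.
  by rewrite -!expnB ?prime_gt0 // -expnD; congr (_ ^ _); lia.
move=> x1 x2; apply/and3P/andP => [[_ dj dk] //|[dj dk]]; split=> //.
apply: (@dvdz_L_coprime_res a b _ _ _ i j k (cop (e i))).
- by apply: dvdz_trans dj; rewrite dvdzE dvdn_exp2l.
- by apply: dvdz_trans dk; rewrite dvdzE dvdn_exp2l // (leq_trans eij).
Qed.

Lemma rho_pow_bound (p : nat) (e : 'I_3 -> nat) (i j k : 'I_3) :
  prime p -> i != j -> i != k -> j != k -> e i <= e j <= e k -> res a b j k != 0%R ->
  rho a b (fun m => p ^ e m)
  <= p ^ (2 * e i + e j + e k + minn (e j) (logn p `|res a b j k|)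
          + minn (e k) (logn p (ell a b k))).
Proof.
move=> p_pr ij ik jk /andP[eij ejk] r0.
rewrite (rho_perm _ _ _ _ ij ik jk) -!expnD.
apply: (leq_trans (@leq_count_box _ _ (fun x1 x2 =>
    ((p ^ e j)%:Z %| L a b j x1%:Z x2%:Z)%Z && ((p ^ e k)%:Z %| L a b k x1%:Z x2%:Z)%Z) _)).
  by move=> x1 x2 /and3P[_ -> ->].
apply: leq_trans (@count_box_forms_bound a b p _ (e j) (e k) j k p_pr _ r0 (ell_gt0 k)) _.
  by rewrite ejk leq_addl.
by rewrite leq_pexp2l ?prime_gt0 //; lia.
Qed.

End Rho.

Theorem lemma3 (a b : 'I_3 -> int)
  (Hnp : forall i j : 'I_3, i != j -> ~ proportional a b i j)
  (HD : Delta a b != 0%N)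
  (p : nat) (Hp : prime p) (e : 'I_3 -> nat) :
  (forall i : 'I_3, minn (e i) (logn p (ell a b i)) = 0%N ->
     rho a b (fun m => if m == i then p ^ e i else 1%N) = p ^ e i)
  /\
  (forall i j k : 'I_3, i != j -> i != k -> j != k ->
     (e i <= e j <= e k)%N ->
     (~~ (p %| Delta a b) ->
        rho a b (fun m => p ^ e m) = p ^ (2 * e i + e j + e k)) /\
     (p %| Delta a b ->
        (rho a b (fun m => p ^ e m) <=
         p ^ (2 * e i + e j + e k + minn (e j) (logn p (Delta a b))
              + minn (e k) (logn p (ell a b k))))%N)).
Proof.
split=> [i min0|i j k ij ik jk eijk].
  rewrite rho_single (count_box_linear_form _ _ _ _ _ Hp (leqnn _) (ell_gt0 a b Hnp i)).
  by rewrite -/(ell a b i) -minnE min0 expn0 muln1.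
have rjk := res_dvd_Delta a b j k jk.
split=> [pD|_].
  by apply: rho_pow_coprime => //; apply: contra pD => /dvdn_trans; apply.
have r0 : res a b j k != 0%R.
  by apply: contra HD => /eqP r0; move: rjk; rewrite r0 dvd0n.
apply: leq_trans (rho_pow_bound a b Hnp p e i j k Hp ij ik jk eijk r0) _.
have Delta_gt0 : 0 < Delta a b by rewrite lt0n.
have le_log := dvdn_leq_log p Delta_gt0 rjk.
rewrite leq_pexp2l ?prime_gt0 // leq_add2r leq_add2l leq_min geq_minl.
exact: leq_trans (geq_minr _ _) le_log.
Qed.
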